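(* For integers $d\ge 3$ and $n\ge 1.5(d+1)$, $$m^*(n,d)\le \min_{2\le i\le \lceil n/2\rceil}\Big\{m^*\big(\lceil n/i\rceil,d\big)+i\cdot m^*\big(\lceil n/i\rceil,\lfloor d/2\rfloor\big)\Big\}.$$
   Context: For a binary matrix $M$ and a nonempty set $S$ of its columns, $S$ is a stopping set if the submatrix formed by $S$ has no row with exactly one $1$; the stopping distance $s(M)$ is the minimum size of a stopping set ($+\infty$ if $M$ has no stopping set). For a positive integer $d$, $M$ is $d$-decodable if $s(M)\ge d+1$. For positive integers $n,d$ (with $d$ possibly exceeding $n$), $m^*(n,d)$ is the minimum $m$ such that an $m\times n$ $d$-decodable binary matrix exists. *)

From mathcomp Require Import all_boot all_algebra.
Set Implicit Arguments. Unset Strict Implicit. Unset Printing Implicit Defensive.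

Definition stopping_set (m n : nat) (A : 'M[bool]_(m, n)) (S : {set 'I_n}) : bool :=
  (S != set0) && [forall i : 'I_m, #|[set j in S | A i j]| != 1%N].

(* A is d-decodable iff s(A) >= d+1, i.e. every stopping set has size >= d+1
   (vacuously true when there is no stopping set, s(A) = +oo). *)
Definition decodable (m n : nat) (A : 'M[bool]_(m, n)) (d : nat) : bool :=
  [forall S : {set 'I_n}, stopping_set A S ==> (d < #|S|)%N].

Definition has_decodable (n d m : nat) : bool :=
  [exists A : 'M[bool]_(m, n), decodable A d].

(* The identity matrix has no stopping set, so some d-decodable n-column matrix exists. *)
Lemma has_decodable_exists (n d : nat) : exists m, has_decodable n d m.
Proof.
exists n; apply/existsP; exists ((\matrix_(i < n, j < n) (i == j))%R).
apply/forallP => S; apply/implyP => /andP [/set0Pn [j jS] /forallP /(_ j)].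
suff -> : [set k in S | ((\matrix_(i < n, j < n) (i == j))%R : 'M[bool]_n) j k] = [set j] by rewrite cards1.
apply/setP => k; rewrite !inE mxE.
by rewrite eq_sym; case: eqP => [->|]; rewrite ?jS ?andbT ?andbF.
Qed.

Definition mstar (n d : nat) : nat := ex_minn (has_decodable_exists n d).

(** Split the n columns into i blocks of k >= n/i columns, each block being a
    copy of the k columns of a d-decodable matrix A (m^*(k,d) rows shared by
    all blocks) and of a floor(d/2)-decodable matrix B (m^*(k,floor(d/2)) rows
    private to the block).  A stopping set inside one block is a stopping set
    of A, hence has more than d columns; a stopping set meeting two blocks
    meets each of them in a stopping set of B, hence has at least
    2 (floor(d/2) + 1) > d columns. *)

From mathcomp Require Import all_boot all_algebra.
From mathcomp Require Import zify.
Set Implicit Arguments. Unset Strict Implicit. Unset Printing Implicit Defensive.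

Lemma stopping_set_col_mx m1 m2 n (A : 'M[bool]_(m1, n)) (B : 'M[bool]_(m2, n))
    (S : {set 'I_n}) :
  stopping_set (col_mx A B) S = stopping_set A S && stopping_set B S.
Proof.
rewrite /stopping_set; case: (S != set0) => //=.
apply/forallP/andP => [stAB | [/forallP stA /forallP stB] r].
  split; apply/forallP => r.
    by have := stAB (lshift m2 r); under eq_finset do rewrite col_mxEu.
  by have := stAB (rshift m1 r); under eq_finset do rewrite col_mxEd.
rewrite -[r]splitK; case: split => r' /=.
  by under eq_finset do rewrite col_mxEu.
by under eq_finset do rewrite col_mxEd.
Qed.

Lemma stopping_set_colsub m k n (A : 'M[bool]_(m, k)) (f : 'I_n -> 'I_k)
    (S : {set 'I_n}) :
  {in S &, injective f} -> stopping_set (colsub f A) S = stopping_set A (f @: S).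
Proof.
move=> finj; rewrite /stopping_set imset_eq0; congr (_ && _).
apply: eq_forallb => r; congr (_ != 1%N).
have -> : [set j in f @: S | A r j] = f @: [set c in S | colsub f A r c].
  apply/setP => j; rewrite inE; apply/andP/imsetP => [[/imsetP[c cS ->] Arc]|[c]].
    by exists c; rewrite // inE cS mxE.
  by rewrite inE mxE => /andP[cS Arc] ->; rewrite imset_f.
by rewrite card_in_imset //; apply: sub_in2 finj => c; rewrite inE => /andP[].
Qed.

Lemma decodable_colsub m k n (A : 'M[bool]_(m, k)) (f : 'I_n -> 'I_k) d
    (S : {set 'I_n}) :
  decodable A d -> {in S &, injective f} -> stopping_set (colsub f A) S ->
  (d < #|S|)%N.
Proof.
move=> /forallP decA finj; rewrite stopping_set_colsub // -(card_in_imset finj).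
exact: implyP (decA _).
Qed.

Definition unpair_index m n (q : 'I_(m * n)) : 'I_m * 'I_n :=
  enum_val (cast_ord (esym (mxvec_cast m n)) q).

Lemma unpair_mxvec_index m n (j : 'I_m) (r : 'I_n) :
  unpair_index (mxvec_index j r) = (j, r).
Proof. by rewrite /unpair_index /mxvec_index cast_ordK enum_rankK. Qed.

Lemma unpair_index_inj m n : injective (@unpair_index m n).
Proof. by move=> q q' /enum_val_inj /cast_ord_inj. Qed.

Section BlockConstruction.

Variables (n k i mA mB d d' : nat).
Variables (A : 'M[bool]_(mA, k)) (B : 'M[bool]_(mB, k)).
Variable place : 'I_n -> 'I_i * 'I_k.
Hypothesis place_inj : injective place.
Hypotheses (decA : decodable A d) (decB : decodable B d').
Hypothesis d_lt : (d < 2 * d'.+1)%N.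

Let block c := (place c).1.
Let pos c := (place c).2.

(* Row [mxvec_index j r] is row [r] of [B], spread over the columns of block [j]. *)
Definition block_rows : 'M[bool]_(i * mB, n) :=
  \matrix_(q, c) let: (j, r) := unpair_index q in (block c == j) && B r (pos c).

Definition block_code : 'M[bool]_(mA + i * mB, n) :=
  col_mx (colsub pos A) block_rows.

Lemma pos_inj_in_block (S : {set 'I_n}) j :
  {in [set c in S | block c == j] &, injective pos}.
Proof.
move=> c1 c2; rewrite !inE => /andP[_ /eqP b1] /andP[_ /eqP b2] e12.
by apply: place_inj; rewrite [place c1]surjective_pairing [place c2]surjective_pairing
  -/(block c1) -/(block c2) -/(pos c1) -/(pos c2) b1 b2 e12.
Qed.

Lemma stopping_set_block (S : {set 'I_n}) c :
  stopping_set block_rows S -> c \in S ->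
  stopping_set (colsub pos B) [set x in S | block x == block c].
Proof.
case/andP=> _ /forallP stS cS; apply/andP; split.
  by apply/set0Pn; exists c; rewrite inE cS eqxx.
apply/forallP => r; have := stS (mxvec_index (block c) r).
suff -> : [set x in [set x in S | block x == block c] | colsub pos B r x] =
          [set x in S | block_rows (mxvec_index (block c) r) x] by [].
by apply/setP => x; rewrite !inE !mxE unpair_mxvec_index andbA.
Qed.

Lemma decodable_block_code : decodable block_code d.
Proof.
apply/forallP => S; apply/implyP; rewrite stopping_set_col_mx => /andP[stA stB].
have [one_block | /forall_inPn[c1 c1S /forall_inPn[c2 c2S b12]]] :=
  boolP [forall c1 in S, forall c2 in S, block c1 == block c2].
  apply: (decodable_colsub decA _ stA) => c1 c2 c1S c2S.
  apply: (pos_inj_in_block (S := S) (j := block c1)); rewrite inE ?c1S ?eqxx //.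
  by rewrite c2S eq_sym (forall_inP (forall_inP one_block c1 c1S) c2 c2S).
set S1 := [set x in S | block x == block c1].
set S2 := [set x in S | block x == block c2].
have card1 : (d' < #|S1|)%N :=
  decodable_colsub decB (@pos_inj_in_block S _) (stopping_set_block stB c1S).
have card2 : (d' < #|S2|)%N :=
  decodable_colsub decB (@pos_inj_in_block S _) (stopping_set_block stB c2S).
have disj : [disjoint S1 & S2].
  rewrite -setI_eq0; apply/set0Pn => -[x]; rewrite !inE.
  by case/andP=> /andP[_ /eqP e1] /andP[_ /eqP e2]; rewrite -e1 e2 eqxx in b12.
have sub : S1 :|: S2 \subset S by apply/subsetP => x; rewrite !inE => /orP[] /andP[].
have := subset_leq_card sub; rewrite cardsU (disjoint_setI0 disj) cards0.
lia.
Qed.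

End BlockConstruction.

Lemma has_decodable_blocks n k i d d' mA mB :
  (n <= i * k)%N -> (d < 2 * d'.+1)%N ->
  has_decodable k d mA -> has_decodable k d' mB -> has_decodable n d (mA + i * mB).
Proof.
move=> nik d_lt /existsP[A decA] /existsP[B decB]; apply/existsP.
pose place (c : 'I_n) := unpair_index (widen_ord nik c).
have place_inj : injective place.
  by move=> c1 c2 /unpair_index_inj [] /ord_inj.
by exists (block_code A B place); exact: decodable_block_code place_inj decA decB d_lt.
Qed.

Lemma mstar_spec n d : has_decodable n d (mstar n d).
Proof. by rewrite /mstar; case: ex_minnP. Qed.

Lemma mstar_min n d m : has_decodable n d m -> (mstar n d <= m)%N.
Proof. by rewrite /mstar; case: ex_minnP => m0 _; apply. Qed.

Lemma mstar_blocks n k i d d' :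
  (n <= i * k)%N -> (d < 2 * d'.+1)%N ->
  (mstar n d <= mstar k d + i * mstar k d')%N.
Proof.
move=> nik d_lt; apply: mstar_min.
exact: has_decodable_blocks nik d_lt (mstar_spec k d) (mstar_spec k d').
Qed.

Theorem theorem5p1 (n d : nat) :
  (3 <= d)%N -> (3 * (d + 1) <= 2 * n)%N ->
  forall i : nat, (2 <= i)%N -> (i <= (n + 1) %/ 2)%N ->
    (mstar n d <= mstar ((n + i.-1) %/ i) d
                  + i * mstar ((n + i.-1) %/ i) (d %/ 2))%N.
Proof.
move=> _ _ i i_ge2 _; have i_gt0 : (0 < i)%N by lia.
apply: mstar_blocks; last by rewrite mulnC -ltn_divLR.
have := ltnSn ((n + i.-1) %/ i); rewrite ltn_divLR //; lia.
Qed.
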